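(* Let $a>0$, $b>0$, $c\ge 1$ and $d\ge 1$ be real numbers such that $a-ad+c>0$ and $b-bc+d>0$. Then $$\frac{d(a+1)(c+d-1)}{a+c+d}+\frac{c(a+c-ad)}{a+c}+a+\frac{b(ab+ad+bc)}{b+d}+\frac{(1+b)(b+d-bc)}{b+c+d}- \frac{3\sqrt{5}-5}{2}(a+b+c+d+ab)\ge 0,$$ with equality if and only if $a=b=(\sqrt{5}-1)/2$ and $c=d=1$. *)

From Stdlib Require Import Reals.
Open Scope R_scope.

Definition lhs41 (a b c d : R) : R :=
  d * (a + 1) * (c + d - 1) / (a + c + d)
  + c * (a + c - a * d) / (a + c)
  + a
  + b * (a * b + a * d + b * c) / (b + d)
  + (1 + b) * (b + d - b * c) / (b + c + d)
  - (3 * sqrt 5 - 5) / 2 * (a + b + c + d + a * b).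

(* Write c = 1 + x and d = 1 + y and clear the positive denominators of lhs41, leaving a
   polynomial numerator N in a, b, x, y and s = sqrt 5.  With U = 2a + 1 - s and V = 2b + 1 - s,
   which vanish exactly at a = b = (sqrt 5 - 1)/2, the polynomial
   500 N - (U^2 + V^2 + x^2 + y^2) is an explicit combination of squares multiplied by monomials
   in a, b, x, y, whose coefficients p + q sqrt 5 are nonnegative.  Hence N dominates a sum of
   squares that vanishes only at the equality point. *)

From Stdlib Require Import Reals Lra.
Open Scope R_scope.

Definition surd (s p q : R) : R := p + q * s.

Lemma surd_ge0 (s p q : R) : 0 <= s -> 0 <= p -> 0 <= q -> 0 <= surd s p q.
Proof. unfold surd; intros; nra. Qed.

Lemma surd_ge0_rat_le0 (k s p q : R) : s * s = k -> 0 <= s ->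
  p <= 0 -> 0 <= q -> p * p <= k * (q * q) -> 0 <= surd s p q.
Proof.
  unfold surd; intros <- Hs Hp Hq Hpq.
  assert (Hqs : 0 <= q * s) by nra.
  destruct (Rle_or_lt 0 (p + q * s)) as [|Hneg]; [assumption|].
  assert (0 < (- p - q * s) * (- p + q * s)) by (apply Rmult_lt_0_compat; lra).
  nra.
Qed.

Lemma surd_ge0_irr_le0 (k s p q : R) : s * s = k -> 0 <= s ->
  0 <= p -> q <= 0 -> k * (q * q) <= p * p -> 0 <= surd s p q.
Proof.
  unfold surd; intros <- Hs Hp Hq Hpq.
  assert (Hqs : q * s <= 0) by nra.
  destruct (Rle_or_lt 0 (p + q * s)) as [|Hneg]; [assumption|].
  assert (0 < (- q * s - p) * (p - q * s)) by (apply Rmult_lt_0_compat; lra).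
  nra.
Qed.

Definition lhs41_denominator (a b c d : R) : R :=
  (a + c + d) * (a + c) * (b + d) * (b + c + d).

Definition lhs41_numerator (a b c d s : R) : R :=
  2 * (d * (a + 1) * (c + d - 1) * (a + c) * (b + d) * (b + c + d)
       + c * (a + c - a * d) * (a + c + d) * (b + d) * (b + c + d)
       + a * lhs41_denominator a b c d
       + b * (a * b + a * d + b * c) * (a + c + d) * (a + c) * (b + c + d)
       + (1 + b) * (b + d - b * c) * (a + c + d) * (a + c) * (b + d))
  - (3 * s - 5) * (a + b + c + d + a * b) * lhs41_denominator a b c d.

Lemma lhs41_eq_div (a b c d : R) : 0 < a -> 0 < b -> 1 <= c -> 1 <= d ->
  lhs41 a b c d = lhs41_numerator a b c d (sqrt 5) / (2 * lhs41_denominator a b c d).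
Proof.
  intros; unfold lhs41, lhs41_numerator, lhs41_denominator.
  field; repeat split; lra.
Qed.

Lemma lhs41_denominator_gt0 (a b c d : R) : 0 < a -> 0 < b -> 1 <= c -> 1 <= d ->
  0 < lhs41_denominator a b c d.
Proof. intros; unfold lhs41_denominator; repeat apply Rmult_lt_0_compat; lra. Qed.

Definition equality_defect (a b x y s : R) : R :=
  (2 * a + 1 - s) ^ 2 + (2 * b + 1 - s) ^ 2 + x ^ 2 + y ^ 2.

Lemma equality_defect_ge0 (a b x y s : R) : 0 <= equality_defect a b x y s.
Proof.
  unfold equality_defect.
  repeat apply Rplus_le_le_0_compat; apply pow2_ge_0.
Qed.

Lemma equality_defect_le0 (a b x y s : R) : equality_defect a b x y s <= 0 ->
  2 * a + 1 = s /\ 2 * b + 1 = s /\ x = 0 /\ y = 0.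
Proof.
  unfold equality_defect; intros H.
  set (u := 2 * a + 1 - s) in H; set (v := 2 * b + 1 - s) in H.
  enough (u = 0 /\ v = 0 /\ x = 0 /\ y = 0) by (unfold u, v in *; lra).
  repeat split; nra.
Qed.

Definition sos_certificate (a b x y s : R) : R :=
  let U := 2 * a + 1 - s in let V := 2 * b + 1 - s in
  500 * Rsqr (5163*y + 826*y^2 + (-2961)*x + 1428*x*y + (-1739)*x^2 + (-1443)*V + (-14)*V*y + (-2691)*V*x + (-1407)*V*x^2 + (-498)*U + 955*U*y + 669*U*y^2 + (-903)*U*x + (-491)*U*V + 61*U*V*y + (-542)*U*V*x)
  + 500 * Rsqr (2371*y^2 + (-2755)*x + (-2141)*x*y + 38*x^2 + 1048*V + 859*V*y + 384*V*x + 30*V*x^2 + 1927*U + 2389*U*y + 1366*U*y^2 + 624*U*x + 775*U*V + 495*U*V*y + 291*U*V*x)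
  + 500 * Rsqr (3210*x + 1777*x*y + (-242)*x^2 + (-1233)*V + (-727)*V*y + (-617)*V*x + (-196)*V*x^2 + (-1127)*U + (-1398)*U*y + (-474)*U*y^2 + (-319)*U*x + (-578)*U*V + (-391)*U*V*y + (-152)*U*V*x)
  + 500 * Rsqr (2804*x*y + (-321)*x^2 + (-757)*V + (-317)*V*y + (-667)*V*x + (-260)*V*x^2 + (-634)*U + (-498)*U*y + (-121)*U*y^2 + (-302)*U*x + (-319)*U*V + (-155)*U*V*y + (-155)*U*V*x)
  + 500 * Rsqr (1765*x^2 + 603*V + 226*V*y + 791*V*x + 687*V*x^2 + (-70)*U + (-137)*U*y + (-75)*U*y^2 + 146*U*x + 173*U*V + 105*U*V*y + 104*U*V*x)
  + 500 * Rsqr (1570*V + 280*V*y + 986*V*x + 285*V*x^2 + (-299)*U + (-347)*U*y + (-33)*U*y^2 + 33*U*x + 229*U*V + 90*U*V*y + 92*U*V*x)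
  + 500 * Rsqr (993*V*y + 180*V*x + 89*V*x^2 + 136*U + 308*U*y + 119*U*y^2 + 71*U*x + 66*U*V + 158*U*V*y + 39*U*V*x)
  + 500 * Rsqr (1373*V*x + 211*V*x^2 + (-200)*U + (-226)*U*y + (-66)*U*y^2 + 119*U*x + 19*U*V + 15*U*V*y + 128*U*V*x)
  + 500 * Rsqr (822*V*x^2 + 78*U + 22*U*y + (-52)*U*y^2 + 83*U*x + 65*U*V + 42*U*V*y + 25*U*V*x)
  + 500 * Rsqr (1520*U + 892*U*y + 271*U*y^2 + 301*U*x + 274*U*V + 99*U*V*y + 123*U*V*x)
  + 500 * Rsqr (1352*U*y + 209*U*y^2 + 149*U*x + 59*U*V + 126*U*V*y + 57*U*V*x)
  + 500 * Rsqr (818*U*y^2 + 73*U*x + 56*U*V + 14*U*V*y + 50*U*V*x)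
  + 500 * Rsqr (959*U*x + 14*U*V + (-4)*U*V*y + 115*U*V*x)
  + 500 * Rsqr (392*U*V + 27*U*V*y + 27*U*V*x)
  + 500 * Rsqr (420*U*V*y + (-20)*U*V*x)
  + 500 * Rsqr (420*U*V*x)
  + (surd s 52905896142 (-23632729750)) * Rsqr y
  + (surd s 233356750 (-104233250)) * Rsqr (y - V)
  + (surd s 5690191000 (-2544160000)) * Rsqr (y - U)
  + (surd s 11890069500 (-5285356000)) * Rsqr (y^2)
  + (surd s 64766912892 (-28939115500)) * Rsqr x
  + (surd s (-5681581500) 2541302000) * Rsqr (x + V)
  + (surd s (-232701000) 104149500) * Rsqr (x + U)
  + (surd s 535968986000 (-239663769000)) * Rsqr (x*y)
  + (surd s 11890850500 (-5285376000)) * Rsqr (x^2)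
  + (surd s (-2839600358) 1297398750) * Rsqr V
  + (surd s 672999500 (-300919500)) * Rsqr (V - U)
  + (surd s (-19796680500) 8884463000) * Rsqr (V*y)
  + (surd s 5711363000 (-2522743000)) * Rsqr (V*x)
  + 69145500 * Rsqr (V*x^2)
  + (surd s (-13740916108) 6172309500) * Rsqr U
  + (surd s 5711262000 (-2522769000)) * Rsqr (U*y)
  + 69580500 * Rsqr (U*y^2)
  + (surd s (-19797376000) 8884951000) * Rsqr (U*x)
  + (surd s 1827953750 (-786432000)) * Rsqr (U*V)
  + (surd s 3587211750 (-1572864000)) * Rsqr (U*V*y)
  + (surd s 3586906750 (-1572864000)) * Rsqr (U*V*x)
  + 500 * (a * Rsqr (2897*y + 383*y^2 + (-1863)*x + 48*x*y + 3*V + 394*V*y + (-540)*V*x + 91*U + 48*U*y + 92*U*V))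
  + 500 * (a * Rsqr (1743*y^2 + (-519)*x + 13*x*y + 314*V + 266*V*y + 92*V*x + 262*U + 71*U*y + 236*U*V))
  + 500 * (a * Rsqr (2663*x + 340*x*y + (-1058)*V + (-554)*V*y + (-311)*V*x + (-301)*U + (-58)*U*y + (-208)*U*V))
  + 500 * (a * Rsqr (2098*x*y + (-511)*V + (-133)*V*y + (-276)*V*x + (-110)*U + (-2)*U*y + (-54)*U*V))
  + 500 * (a * Rsqr (1663*V + 370*V*y + 681*V*x + 247*U + 28*U*y + 147*U*V))
  + 500 * (a * Rsqr (1121*V*y + 189*V*x + 46*U + 43*U*y + 97*U*V))
  + 500 * (a * Rsqr (1331*V*x + (-18)*U + 4*U*y + 20*U*V))
  + 500 * (a * Rsqr (1107*U + 107*U*y + 476*U*V))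
  + 500 * (a * Rsqr (586*U*y + 202*U*V))
  + 500 * (a * Rsqr (515*U*V))
  + (surd s 61411420500 (-27421047000)) * (a * Rsqr y)
  + (surd s 12548007000 (-5570560000)) * (a * Rsqr (y^2))
  + (surd s 42474707500 (-18952921500)) * (a * Rsqr x)
  + (surd s 2515616000 (-1124321500)) * (a * Rsqr (x - V))
  + (surd s 198334659500 (-88656456000)) * (a * Rsqr (x*y))
  + (surd s (-7249893000) 3282318000) * (a * Rsqr V)
  + (surd s (-14065284000) 6332883500) * (a * Rsqr (V*y))
  + (surd s 4752731500 (-2084226500)) * (a * Rsqr (V*x))
  + (surd s (-1619145000) 765691000) * (a * Rsqr U)
  + (surd s 7127256500 (-3145728000)) * (a * Rsqr (U*y))
  + (surd s 1265480500 (-524288000)) * (a * Rsqr (U*V))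
  + 500 * (b * Rsqr (3291*y + (-1640)*x + 246*x*y + (-492)*x^2 + (-336)*V + (-86)*V*x + (-908)*U + 39*U*y + (-713)*U*x + (-258)*U*V))
  + 500 * (b * Rsqr (2388*x + 227*x*y + 127*x^2 + (-121)*V + (-619)*U + (-628)*U*y + (-12)*U*x + (-65)*U*V))
  + 500 * (b * Rsqr (2099*x*y + 64*x^2 + (-102)*V + (-506)*U + (-274)*U*y + (-127)*U*x + (-47)*U*V))
  + 500 * (b * Rsqr (1710*x^2 + 204*V + 58*V*x + 125*U + 41*U*y + 160*U*x + 194*U*V))
  + 500 * (b * Rsqr (1135*V + 112*V*x + 362*U + 134*U*y + 126*U*x + 500*U*V))
  + 500 * (b * Rsqr (587*V*x + 12*U + 31*U*y + 75*U*x + 207*U*V))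
  + 500 * (b * Rsqr (1623*U + 668*U*y + 351*U*x + 38*U*V))
  + 500 * (b * Rsqr (1344*U*y + 157*U*x + 35*U*V))
  + 500 * (b * Rsqr (1107*U*x + 59*U*V))
  + 500 * (b * Rsqr (515*U*V))
  + (surd s 47504566000 (-21203357000)) * (b * Rsqr y)
  + (surd s (-2518438500) 1126885000) * (b * Rsqr (y + U))
  + (surd s 61434197000 (-27427297000)) * (b * Rsqr x)
  + (surd s 198334725000 (-88656456000)) * (b * Rsqr (x*y))
  + (surd s 12547221500 (-5570560000)) * (b * Rsqr (x^2))
  + (surd s (-1623122000) 767359000) * (b * Rsqr V)
  + (surd s 7127423500 (-3145728000)) * (b * Rsqr (V*x))
  + (surd s (-2212663500) 1029921500) * (b * Rsqr U)
  + (surd s 4752388000 (-2083884500)) * (b * Rsqr (U*y))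
  + (surd s (-14067226500) 6332541500) * (b * Rsqr (U*x))
  + (surd s 1265903000 (-524288000)) * (b * Rsqr (U*V))
  + 500 * (x * Rsqr (2789*y + 97*y^2 + (-36)*x + (-52)*x*y + (-615)*V + (-214)*V*y + (-622)*V*x + (-376)*U + (-191)*U*y + (-152)*U*V))
  + 500 * (x * Rsqr (1388*y^2 + (-204)*x + (-183)*x*y + (-60)*V + 23*V*y + (-130)*V*x + 1*U + 83*U*y + (-19)*U*V))
  + 500 * (x * Rsqr (2762*x + 504*x*y + 53*V + (-80)*V*y + 188*V*x + (-45)*U + (-363)*U*y + 58*U*V))
  + 500 * (x * Rsqr (2213*x*y + (-72)*V + (-238)*V*y + (-46)*V*x + (-174)*U + (-521)*U*y + (-8)*U*V))
  + 500 * (x * Rsqr (1509*V + 254*V*y + 574*V*x + (-217)*U + (-182)*U*y + 113*U*V))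
  + 500 * (x * Rsqr (952*V*y + 394*V*x + 21*U + 107*U*y + 44*U*V))
  + 500 * (x * Rsqr (1435*V*x + 89*U + 35*U*y + 152*U*V))
  + 500 * (x * Rsqr (1239*U + 278*U*y + 30*U*V))
  + 500 * (x * Rsqr (1304*U*y + 12*U*V))
  + 500 * (x * Rsqr (425*U*V))
  + (surd s 394652918500 (-176457892000)) * (x * Rsqr y)
  + (surd s 28226263500 (-12582912000)) * (x * Rsqr (y^2))
  + (surd s (-15987186000) 7190927000) * (x * Rsqr x)
  + (surd s 84498624000 (-37748736000)) * (x * Rsqr (x*y))
  + (surd s (-7793782500) 3525561000) * (x * Rsqr V)
  + (surd s 21191233500 (-9437184000)) * (x * Rsqr (V*y))
  + (surd s 11941923500 (-5301343000)) * (x * Rsqr (V*x))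
  + (surd s (-11275276500) 5082536500) * (x * Rsqr U)
  + (surd s 34203157500 (-15256625000)) * (x * Rsqr (U*y))
  + (surd s 5364615000 (-2359296000)) * (x * Rsqr (U*V))
  + 500 * (y * Rsqr (2770*y + (-36)*x + 516*x*y + (-103)*x^2 + (-40)*V + (-366)*V*x + 65*U + 205*U*y + (-79)*U*x + 61*U*V))
  + 500 * (y * Rsqr (2789*x + (-45)*x*y + 95*x^2 + (-377)*V + (-195)*V*x + (-614)*U + (-620)*U*y + (-216)*U*x + (-151)*U*V))
  + 500 * (y * Rsqr (2218*x*y + (-91)*x^2 + (-174)*V + (-523)*V*x + (-69)*U + (-39)*U*y + (-238)*U*x + (-7)*U*V))
  + 500 * (y * Rsqr (1381*x^2 + (-14)*V + 22*V*x + (-60)*U + (-119)*U*y + 2*U*x + (-15)*U*V))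
  + 500 * (y * Rsqr (1261*V + 309*V*x + (-260)*U + 9*U*y + (-28)*U*x + 21*U*V))
  + 500 * (y * Rsqr (1315*V*x + (-148)*U + (-12)*U*y + 49*U*x + 5*U*V))
  + 500 * (y * Rsqr (1479*U + 586*U*y + 259*U*x + 120*U*V))
  + 500 * (y * Rsqr (1484*U*y + 249*U*x + 155*U*V))
  + 500 * (y * Rsqr (916*U*x + 2*U*V))
  + 500 * (y * Rsqr (425*U*V))
  + (surd s (-15978842000) 7187632000) * (y * Rsqr y)
  + (surd s 394634870500 (-176446533000)) * (y * Rsqr x)
  + (surd s 84498297500 (-37748736000)) * (y * Rsqr (x*y))
  + (surd s 28226702000 (-12582912000)) * (y * Rsqr (x^2))
  + (surd s (-11277278500) 5083160500) * (y * Rsqr V)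
  + (surd s 34204782000 (-15257673000)) * (y * Rsqr (V*x))
  + (surd s (-7792142000) 3524438000) * (y * Rsqr U)
  + (surd s 11940476500 (-5300990000)) * (y * Rsqr (U*y))
  + (surd s 21190894000 (-9437184000)) * (y * Rsqr (U*x))
  + (surd s 5363986750 (-2359296000)) * (y * Rsqr (U*V))
  + 500 * (a*b * Rsqr (2882*y + (-1700)*x + (-16)*x*y + (-236)*V + (-53)*V*x + 56*U + 34*U*y + (-1)*U*V))
  + 500 * (a*b * Rsqr (2328*x + (-31)*x*y + (-103)*V + 3*V*x + (-251)*U + (-41)*U*y + (-2)*U*V))
  + 500 * (a*b * Rsqr (2088*x*y + (-34)*V + 12*V*x + (-34)*U + 12*U*y + (-11)*U*V))
  + 500 * (a*b * Rsqr (1992*V + 229*V*x + 416*U + 59*U*y + (-31)*U*V))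
  + 500 * (a*b * Rsqr (652*V*x + 33*U + 12*U*y + (-24)*U*V))
  + 500 * (a*b * Rsqr (1947*U + 222*U*y + (-24)*U*V))
  + 500 * (a*b * Rsqr (652*U*y + (-23)*U*V))
  + 500 * (a*b * Rsqr (274*U*V))
  + (surd s 36783935000 (-16434779000)) * (a*b * Rsqr y)
  + (surd s 36778798000 (-16438944000)) * (a*b * Rsqr x)
  + (surd s 56315663500 (-25165824000)) * (a*b * Rsqr (x*y))
  + (surd s (-2442968500) 1109512000) * (a*b * Rsqr V)
  + (surd s 7071618500 (-3145728000)) * (a*b * Rsqr (V*x))
  + (surd s (-2439333500) 1108172000) * (a*b * Rsqr U)
  + (surd s 7071375000 (-3145728000)) * (a*b * Rsqr (U*y))
  + (surd s 1796086000 (-786432000)) * (a*b * Rsqr (U*V))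
  + 500 * (a*x * Rsqr (2370*y + (-442)*x + (-479)*V + (-99)*V*y + (-369)*V*x + (-40)*(U*(1+b))))
  + 500 * (a*x * Rsqr (2425*x + 492*V + 115*V*y + 816*V*x + 2*(U*(1+b))))
  + 500 * (a*x * Rsqr (1341*V + 120*V*y + 501*V*x + 41*(U*(1+b))))
  + 500 * (a*x * Rsqr (722*V*y + 185*V*x))
  + 500 * (a*x * Rsqr (1072*V*x + 100*(U*(1+b))))
  + 500 * (a*x * Rsqr (549*(U*(1+b))))
  + (surd s 198601286000 (-88742208000)) * (a*x * Rsqr y)
  + (surd s (-21223124500) 9558180000) * (a*x * Rsqr x)
  + (surd s (-3894206000) 1808058000) * (a*x * Rsqr V)
  + (surd s 14216389000 (-6291456000)) * (a*x * Rsqr (V*y))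
  + (surd s 7183544500 (-3145728000)) * (a*x * Rsqr (V*x))
  + (surd s 7182689000 (-3145728000)) * (a*x * Rsqr ((U*(1+b))))
  + 500 * (a*y * Rsqr (3093*y + (-286)*x + 105*V + (-157)*V*x + 843*U + 232*U*V))
  + 500 * (a*y * Rsqr (2326*x + (-248)*V + (-105)*V*x + (-106)*U + (-31)*U*V))
  + 500 * (a*y * Rsqr (1230*V + 191*V*x + (-107)*U + (-23)*U*V))
  + 500 * (a*y * Rsqr (1380*V*x + (-212)*U + (-59)*U*V))
  + 500 * (a*y * Rsqr (1555*U + 320*U*V))
  + 500 * (a*y * Rsqr (292*U*V))
  + (surd s 6771767500 (-3011471000)) * (a*y * Rsqr y)
  + (surd s 151531901000 (-67747388000)) * (a*y * Rsqr x)
  + (surd s (-8259832000) 3713238500) * (a*y * Rsqr V)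
  + (surd s 21145046000 (-9437184000)) * (a*y * Rsqr (V*x))
  + (surd s 3508952500 (-1550831750)) * (a*y * Rsqr U)
  + (surd s (-2943390500) 1316351250) * (a*y * Rsqr (U + U*V))
  + (surd s 6501439500 (-2889215250)) * (a*y * Rsqr (U*V))
  + 500 * (b*x * Rsqr (2343*y + (-377)*x + (-208)*V + (-259)*U + (-85)*U*y + (-59)*U*V))
  + 500 * (b*x * Rsqr (3070*x + 824*V + 74*U + (-169)*U*y + 227*U*V))
  + 500 * (b*x * Rsqr (1573*V + (-84)*U + (-199)*U*y + 326*U*V))
  + 500 * (b*x * Rsqr (1227*U + 177*U*y))
  + 500 * (b*x * Rsqr (1367*U*y + (-15)*U*V))
  + 500 * (b*x * Rsqr (292*U*V))
  + (surd s 151532468500 (-67748722000)) * (b*x * Rsqr y)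
  + (surd s 6766991500 (-3009922000)) * (b*x * Rsqr x)
  + (surd s 3508526250 (-1550407500)) * (b*x * Rsqr V)
  + (surd s (-2943527250) 1316428000) * (b*x * Rsqr (V + U*V))
  + (surd s (-8260374000) 3712785000) * (b*x * Rsqr U)
  + (surd s 21144196000 (-9437184000)) * (b*x * Rsqr (U*y))
  + (surd s 6501571750 (-2889292000)) * (b*x * Rsqr (U*V))
  + 500 * (b*y * Rsqr (2465*y + (-425)*x + 570*U + 869*U*y + 131*U*x + 9*(V*(1+a))))
  + 500 * (b*y * Rsqr (2332*x + (-383)*U + (-217)*U*y + (-77)*U*x + (-39)*(V*(1+a))))
  + 500 * (b*y * Rsqr (1341*U + 501*U*y + 120*U*x + 41*(V*(1+a))))
  + 500 * (b*y * Rsqr (1088*U*y + 122*U*x + 98*(V*(1+a))))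
  + 500 * (b*y * Rsqr (711*U*x + (-17)*(V*(1+a))))
  + 500 * (b*y * Rsqr (549*(V*(1+a))))
  + (surd s (-21221261500) 9557667000) * (b*y * Rsqr y)
  + (surd s 198580321500 (-88740709000)) * (b*y * Rsqr x)
  + (surd s (-3893357500) 1806978500) * (b*y * Rsqr U)
  + (surd s 7182554500 (-3145728000)) * (b*y * Rsqr (U*y))
  + (surd s 14216796500 (-6291456000)) * (b*y * Rsqr (U*x))
  + (surd s 7182743500 (-3145728000)) * (b*y * Rsqr ((V*(1+a))))
  + 500 * (x*y * Rsqr (1910*1 + 403*y + 403*x + (-327)*V + (-324)*V*x + (-327)*U + (-324)*U*y + (-72)*U*V))
  + 500 * (x*y * Rsqr (3305*y + (-524)*x + (-446)*V + (-888)*V*x + (-130)*U + 5*U*y + (-78)*U*V))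
  + 500 * (x*y * Rsqr (3263*x + (-203)*V + (-138)*V*x + (-473)*U + (-899)*U*y + (-92)*U*V))
  + 500 * (x*y * Rsqr (1294*V + 462*V*x + 4*U + 117*U*y + 82*U*V))
  + 500 * (x*y * Rsqr (1260*V*x + 119*U + 251*U*y + 105*U*V))
  + 500 * (x*y * Rsqr (1289*U + 441*U*y + 72*U*V))
  + 500 * (x*y * Rsqr (1238*U*y + 83*U*V))
  + 500 * (x*y * Rsqr (397*U*V))
  + (surd s 6166428000 (-2721053000)) * (x*y * Rsqr 1)
  + (surd s 281974399000 (-126067706000)) * (x*y * Rsqr y)
  + (surd s 281971119000 (-126065863000)) * (x*y * Rsqr x)
  + (surd s 16597213500 (-7389639500)) * (x*y * Rsqr V)
  + 78844000 * (x*y * Rsqr (V*x))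
  + (surd s 16595852500 (-7388128000)) * (x*y * Rsqr U)
  + 77139500 * (x*y * Rsqr (U*y))
  + (surd s 8871158750 (-3932160000)) * (x*y * Rsqr (U*V))
  + 1067008000 * (y^2)
  + 2926592000 * (y^3)
  + 8192000 * (y^4)
  + 892928000 * (x*y)
  + 2148352000 * (x*y^2)
  + 2777088000 * (x*y^3)
  + 165888000 * (x*y^4)
  + 1067008000 * (x^2)
  + 2148352000 * (x^2*y)
  + 1792000000 * (x^2*y^2)
  + 1247232000 * (x^2*y^3)
  + 2926592000 * (x^3)
  + 2777088000 * (x^3*y)
  + 1247232000 * (x^3*y^2)
  + 8192000 * (x^4)
  + 165888000 * (x^4*y)
  + 1335296000 * (b*y^2)
  + 1196032000 * (b*y^3)
  + (surd s 24461033000 (-10497411000)) * (b*x*y)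
  + 1892352000 * (b*x*y^2)
  + (surd s 88058052000 (-37748736000)) * (b*x*y^3)
  + 1323008000 * (b*x^2)
  + 1849344000 * (b*x^2*y)
  + 1320960000 * (b*x^2*y^2)
  + 2951168000 * (b*x^3)
  + (surd s 130478851000 (-57171968000)) * (b*x^3*y)
  + 624640000 * (b*x^4)
  + 1011712000 * (b^2*y^2)
  + 1212416000 * (b^2*x*y)
  + 1155072000 * (b^2*x*y^2)
  + 1814528000 * (b^2*x^2)
  + 2512896000 * (b^2*x^2*y)
  + 5015552000 * (b^2*x^3)
  + 2646016000 * (b^2*x^3*y)
  + 1376256000 * (b^2*x^4)
  + (surd s 29360128000 (-12582912000)) * (b^3*x*y)
  + 114688000 * (b^3*x^2)
  + 1323008000 * (a*y^2)
  + 2951168000 * (a*y^3)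
  + 624640000 * (a*y^4)
  + (surd s 24492264000 (-10506983000)) * (a*x*y)
  + 1849344000 * (a*x*y^2)
  + (surd s 130481885000 (-57171968000)) * (a*x*y^3)
  + 1335296000 * (a*x^2)
  + 1892352000 * (a*x^2*y)
  + 1320960000 * (a*x^2*y^2)
  + 1196032000 * (a*x^3)
  + (surd s 88056310000 (-37748736000)) * (a*x^3*y)
  + 1632256000 * (a*b*y^2)
  + (surd s (-3567198000) 3379200000) * (a*b*y^3)
  + (surd s 186310171000 (-82863881000)) * (a*b*x*y)
  + (surd s 56676571000 (-24554679000)) * (a*b*x*y^2)
  + (surd s 29360128000 (-12582912000)) * (a*b*x*y^3)
  + 1632256000 * (a*b*x^2)
  + (surd s 56675471000 (-24554707000)) * (a*b*x^2*y)
  + 1376256000 * (a*b*x^2*y^2)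
  + (surd s (-3568632000) 3379200000) * (a*b*x^3)
  + (surd s 29360128000 (-12582912000)) * (a*b*x^3*y)
  + 1937408000 * (a*b^2*y^2)
  + (surd s 68793714000 (-30205978000)) * (a*b^2*x*y)
  + 737280000 * (a*b^2*x*y^2)
  + 2666496000 * (a*b^2*x^2)
  + 2820096000 * (a*b^2*x^2*y)
  + 5009408000 * (a*b^2*x^3)
  + (surd s 29360128000 (-12582912000)) * (a*b^3*x*y)
  + 112640000 * (a*b^3*x^2)
  + 1814528000 * (a^2*y^2)
  + 5015552000 * (a^2*y^3)
  + 1376256000 * (a^2*y^4)
  + 1212416000 * (a^2*x*y)
  + 2512896000 * (a^2*x*y^2)
  + 2646016000 * (a^2*x*y^3)
  + 1011712000 * (a^2*x^2)
  + 1155072000 * (a^2*x^2*y)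
  + 2666496000 * (a^2*b*y^2)
  + 5009408000 * (a^2*b*y^3)
  + (surd s 68780636000 (-30206998000)) * (a^2*b*x*y)
  + 2820096000 * (a^2*b*x*y^2)
  + 1937408000 * (a^2*b*x^2)
  + 737280000 * (a^2*b*x^2*y)
  + 3741696000 * (a^2*b^2*y^2)
  + 1292288000 * (a^2*b^2*x*y)
  + 3741696000 * (a^2*b^2*x^2)
  + 114688000 * (a^3*y^2)
  + (surd s 29360128000 (-12582912000)) * (a^3*x*y)
  + 112640000 * (a^3*b*y^2)
  + (surd s 29360128000 (-12582912000)) * (a^3*b*x*y).

Lemma sos_certificate_eq (a b x y s : R) : s * s = 5 ->
  sos_certificate a b x y s
  = 8388608 * (500 * lhs41_numerator a b (1 + x) (1 + y) s - equality_defect a b x y s).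
Proof.
  intros Hs; unfold sos_certificate, lhs41_numerator, lhs41_denominator, equality_defect,
    surd, Rsqr.
  ring [Hs].
Qed.

Ltac surd_ge0_tac Hs Hs0 :=
  first [ lra
        | apply surd_ge0; lra
        | apply (surd_ge0_rat_le0 _ _ _ _ Hs Hs0); lra
        | apply (surd_ge0_irr_le0 _ _ _ _ Hs Hs0); lra ].

Lemma sos_certificate_ge0 (a b x y s : R) : s * s = 5 -> 0 <= s ->
  0 <= a -> 0 <= b -> 0 <= x -> 0 <= y -> 0 <= sos_certificate a b x y s.
Proof.
  intros Hs Hs0 Ha Hb Hx Hy; unfold sos_certificate; cbv zeta.
  repeat apply Rplus_le_le_0_compat;
    (apply Rmult_le_pos;
      [ surd_ge0_tac Hs Hs0
      | repeat first [ apply Rle_0_sqr | apply pow_le; assumption | assumption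
                     | apply Rmult_le_pos ] ]).
Qed.

Lemma equality_defect_le_numerator (a b x y s : R) : s * s = 5 -> 0 <= s ->
  0 <= a -> 0 <= b -> 0 <= x -> 0 <= y ->
  equality_defect a b x y s <= 500 * lhs41_numerator a b (1 + x) (1 + y) s.
Proof.
  intros Hs Hs0 Ha Hb Hx Hy.
  pose proof (sos_certificate_ge0 a b x y s Hs Hs0 Ha Hb Hx Hy) as Hcert.
  rewrite sos_certificate_eq in Hcert by exact Hs; lra.
Qed.

Lemma lhs41_numerator_equality_case (t s : R) : s * s = 5 -> 2 * t + 1 = s ->
  lhs41_numerator t t 1 1 s = 0.
Proof.
  intros Hs <-.
  assert (Ht : t * t = 1 - t) by nra.
  unfold lhs41_numerator, lhs41_denominator; ring [Ht].
Qed.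

Theorem theorem4p1 (a b c d : R) :
  0 < a -> 0 < b -> 1 <= c -> 1 <= d ->
  0 < a - a * d + c -> 0 < b - b * c + d ->
  0 <= lhs41 a b c d /\
  (lhs41 a b c d = 0 <->
     (a = (sqrt 5 - 1) / 2 /\ b = (sqrt 5 - 1) / 2 /\ c = 1 /\ d = 1)).
Proof.
  intros Ha Hb Hc Hd _ _.
  assert (Hs : sqrt 5 * sqrt 5 = 5) by (apply sqrt_sqrt; lra).
  assert (Hs0 : 0 <= sqrt 5) by apply sqrt_pos.
  pose proof (lhs41_denominator_gt0 a b c d Ha Hb Hc Hd) as HD.
  pose proof (equality_defect_le_numerator a b (c - 1) (d - 1) (sqrt 5) Hs Hs0
                ltac:(lra) ltac:(lra) ltac:(lra) ltac:(lra)) as Hdef.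
  pose proof (equality_defect_ge0 a b (c - 1) (d - 1) (sqrt 5)) as Hdef0.
  rewrite !Rplus_minus in Hdef.
  rewrite lhs41_eq_div by assumption.
  split; [| split].
  - apply Rle_mult_inv_pos; lra.
  - intros Hzero.
    assert (HN : lhs41_numerator a b c d (sqrt 5) = 0).
    { apply (Rmult_eq_reg_r (/ (2 * lhs41_denominator a b c d))).
      - unfold Rdiv in Hzero; lra.
      - apply Rinv_neq_0_compat; lra. }
    destruct (equality_defect_le0 a b (c - 1) (d - 1) (sqrt 5)) as (? & ? & ? & ?); lra.
  - intros (-> & -> & -> & ->).
    rewrite lhs41_numerator_equality_case by (assumption || lra).
    apply Rdiv_0_l.
Qed.
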